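(* Let $X$ be a real $n\times p$ matrix ($p<n$) of full column rank and $\sigma>0$. The regression breakdown point of the $\ell_1\square\ell_2$ estimator is at least $m(X)$; that is, for every $f\in\mathbb{R}^p$, $z\in\mathbb{R}^n$ and every $M\subset\{1,\dots,n\}$ with $|M|\leq m(X)$, the set of all first components $\hat g$ of minimizers of $(g,b)\mapsto\sigma\|y-Xg-b\|_1+\frac12\|b\|_2^2$ with $y=Xf+z+e$, where $e$ ranges over all vectors in $\mathbb{R}^n$ with $\operatorname{supp}(e)\subset M$, is bounded.
   Context: For data $y\in\mathbb{R}^n$, the $\ell_1\square\ell_2$ estimator is the first component $\hat g$ of a solution $(\hat g,\hat b)$ of $\min_{(g,b)\in\mathbb{R}^p\times\mathbb{R}^n}\sigma\|y-Xg-b\|_1+\frac12\|b\|_2^2$. The regression breakdown point of an estimator is the maximum number of components of the data $y$ that may diverge while keeping the estimator bounded. With $N=\{1,\dots,n\}$ and $x_i^\top$ the rows of $X$, $c_k(X)=\min_{S\subset N,|S|=k}\min_{g\neq0}\frac{\sum_{i\in N\setminus S}|x_i^\top g|}{\sum_{i\in N}|x_i^\top g|}$ for $k\in N$, and $m(X)=\max\{k\in N: c_k(X)>1/2\}$. *)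

From HB Require Import structures.
From mathcomp Require Import all_boot all_order all_algebra.
From mathcomp Require Import classical_sets reals.
Set Implicit Arguments. Unset Strict Implicit. Unset Printing Implicit Defensive.
Import Order.TTheory GRing.Theory Num.Theory.
Local Open Scope ring_scope.
Local Open Scope classical_set_scope.

Section Defs.
Variable R : realType.

Definition l1norm (k : nat) (v : 'cV[R]_k) : R := \sum_(i < k) `|v i 0|.
Definition l2sq (k : nat) (v : 'cV[R]_k) : R := \sum_(i < k) (v i 0) ^+ 2.

Definition l1l2_obj (n p : nat) (sigma : R) (X : 'M[R]_(n, p)) (y : 'cV[R]_n)
  (g : 'cV[R]_p) (b : 'cV[R]_n) : R :=
  sigma * l1norm (y - X *m g - b) + 2^-1 * l2sq b.

Definition is_l1l2_minimizer (n p : nat) (sigma : R) (X : 'M[R]_(n, p))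
  (y : 'cV[R]_n) (g : 'cV[R]_p) (b : 'cV[R]_n) : Prop :=
  forall (g' : 'cV[R]_p) (b' : 'cV[R]_n),
    l1l2_obj sigma X y g b <= l1l2_obj sigma X y g' b'.

Definition ck_ratio (n p : nat) (X : 'M[R]_(n, p)) (S : {set 'I_n}) (g : 'cV[R]_p) : R :=
  (\sum_(i < n | i \notin S) `|(X *m g) i 0|) / (\sum_(i < n) `|(X *m g) i 0|).

(* c_k(X) = min_{|S| = k} min_{g <> 0} ratio, written as the infimum of the
   set of attained values (the paper's minimum is attained). *)
Definition c_k (n p : nat) (X : 'M[R]_(n, p)) (k : nat) : R :=
  inf [set r : R | exists (S : {set 'I_n}) (g : 'cV[R]_p),
         #|S| = k /\ g != 0 /\ r = ck_ratio X S g].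

(* m(X) = max { k in {1..n} : c_k(X) > 1/2 }, with the convention 0 if empty *)
Definition m_of (n p : nat) (X : 'M[R]_(n, p)) : nat :=
  \max_(k < n.+1 | (0 < k)%N && (2^-1 < c_k X k)) (k : nat).

End Defs.

From HB Require Import structures.
From mathcomp Require Import all_boot all_order all_algebra.
From mathcomp Require Import classical_sets reals.
From mathcomp Require Import ring lra zify.
Set Implicit Arguments.
Unset Strict Implicit.
Unset Printing Implicit Defensive.
Import Order.TTheory GRing.Theory Num.Theory.
Local Open Scope ring_scope.

(* Put a := X (g - f) and split its entries into those indexed by M (where the
   data may be corrupted) and the others.  Comparing the objective at a
   minimizer (g, b) with its value at (f, 0), and using that
   min_b (sigma |u - b| + b^2/2) is at least sigma |u| - sigma^2/2, shows that
   sigma (sum_{i notin M} |a_i| - sum_{i in M} |a_i|) is bounded independently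
   of e.  Since |M| <= m(X), some c > 1/2 satisfies
   c ||a||_1 <= sum_{i notin M} |a_i|, so (2c - 1) ||a||_1 is bounded as well;
   a left inverse of X then bounds ||g - f||_1. *)

Lemma exists_superset_card (T : finType) (A : {set T}) (k : nat) :
  (#|A| <= k <= #|T|)%N -> exists2 S : {set T}, A \subset S & #|S| = k.
Proof.
move=> /andP[hAk]; have [d ->] : exists d, k = (#|A| + d)%N.
  by exists (k - #|A|)%N; lia.
elim: d A {hAk} => [|d IH] A hdT; first by exists A; rewrite ?addn0.
have [x hx] : exists x, x \notin A.
  have : (0 < #|~: A|)%N.
    by rewrite -(ltn_add2l #|A|) addn0 cardsC; apply: leq_trans hdT; lia.
  by move/card_gt0P => [x]; rewrite inE; exists x.
have hxA : #|x |: A| = #|A|.+1 by rewrite cardsU1 hx.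
have [S hAS hS] := IH (x |: A) ltac:(rewrite hxA; lia).
by exists S; [exact: fintype.subset_trans (subsetU1 x A) hAS | rewrite hS hxA addnS].
Qed.

Section L1L2Breakdown.
Variable R : realType.
Implicit Types (sigma : R) (n p : nat).

Lemma l1normD n (u v : 'cV[R]_n) : l1norm (u + v) <= l1norm u + l1norm v.
Proof. by rewrite /l1norm -big_split; apply: ler_sum => i _; rewrite mxE ler_normD. Qed.

Lemma l1norm_le_leftinv n p (X : 'M[R]_(n, p)) (B : 'M[R]_(p, n)) (w : 'cV[R]_p) :
  B *m X = 1%:M ->
  l1norm w <= (\sum_(j < p) \sum_(i < n) `|B j i|) * l1norm (X *m w).
Proof.
move=> hB; rewrite /l1norm mulr_suml; apply: ler_sum => j _.
rewrite -[in X in X <= _](mul1mx w) -hB -mulmxA mxE mulr_suml.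
apply: le_trans (ler_norm_sum _ _ _) _; apply: ler_sum => i _.
by rewrite normrM ler_wpM2l // (bigD1 i) //= lerDl sumr_ge0.
Qed.

Lemma sum_notin_le_subset n (F : 'I_n -> R) (A S : {set 'I_n}) :
  A \subset S -> (forall i, 0 <= F i) ->
  \sum_(i < n | i \notin S) F i <= \sum_(i < n | i \notin A) F i.
Proof.
move=> hAS F0; rewrite [leRHS]big_mkcond [leLHS]big_mkcond /=.
apply: ler_sum => i _; case: (boolP (i \in S)) => hiS /=; first by case: ifP.
by rewrite (contra (fintype.subsetP hAS i) hiS).
Qed.

(* Minimizing over [b] turns the coordinate term into Huber's function of [u - a],
   which is at least [sigma |u - a| - sigma^2/2]. *)
Lemma huber_coord_lb sigma (u a b : R) : 0 <= sigma ->
  sigma * `| `|u| - `|a| | - sigma ^+ 2 / 2 <= sigma * `|u - a - b| + 2^-1 * b ^+ 2.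
Proof.
move=> s0.
have hua := ler_dist_dist u a.
have hb : `|u - a| <= `|u - a - b| + `|b| by have := ler_normD (u - a - b) b; rewrite subrK.
have hsq := sqr_ge0 (`|b| - sigma).
have -> : b ^+ 2 = `|b| ^+ 2 by rewrite real_normK // num_real.
nra.
Qed.

Lemma l1l2_minimizer_balance n p sigma (X : 'M[R]_(n, p)) (y : 'cV[R]_n)
    (f g : 'cV[R]_p) (b : 'cV[R]_n) (M : {set 'I_n}) :
  0 <= sigma -> is_l1l2_minimizer sigma X y g b ->
  sigma * (\sum_(i < n | i \notin M) `|(X *m (g - f)) i 0|
           - \sum_(i < n | i \in M) `|(X *m (g - f)) i 0|)
  <= n%:R * (sigma ^+ 2 / 2)
     + 2 * sigma * \sum_(i < n | i \notin M) `|(y - X *m f) i 0|.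
Proof.
move=> s0 hmin.
set a := X *m (g - f); set r := y - X *m f.
have hobj : sigma * l1norm (r - a - b) + 2^-1 * l2sq b <= sigma * l1norm r.
  have l2sq0 : l2sq (0 : 'cV[R]_n) = 0.
    by rewrite /l2sq big1 // => i _; rewrite mxE expr0n.
  have -> : r - a - b = y - X *m g - b.
    by rewrite /r /a mulmxBr opprB addrA subrK.
  by have := hmin f 0; rewrite /l1l2_obj l2sq0 mulr0 addr0 subr0.
pose s (i : 'I_n) : R := if i \in M then - `|a i 0| else `|a i 0|.
pose t (i : 'I_n) : R := if i \notin M then `|r i 0| else 0.
have hcoord i : sigma * s i - sigma ^+ 2 / 2 - 2 * sigma * t i
    <= sigma * `|r i 0 - a i 0 - b i 0| + 2^-1 * b i 0 ^+ 2 - sigma * `|r i 0|.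
  have := huber_coord_lb (r i 0) (a i 0) (b i 0) s0.
  have hle1 := ler_norm (`|a i 0| - `|r i 0|); rewrite distrC in hle1.
  have hle2 := ler_norm (`|r i 0| - `|a i 0|).
  by rewrite /s /t; case: (i \in M) => /=; nra.
have hsum := ler_sum (index_enum 'I_n) (P := xpredT) (fun i _ => hcoord i).
rewrite !sumrB -!mulr_sumr sumr_const card_ord -big_mkcond big_split /= -!mulr_sumr in hsum.
have hl1 : \sum_(i < n) `|r i 0 - a i 0 - b i 0| = l1norm (r - a - b).
  by apply: eq_bigr => i _; rewrite !mxE.
have -> : \sum_(i < n | i \notin M) `|a i 0| - \sum_(i in M) `|a i 0| = \sum_(i < n) s i.
  rewrite [RHS](bigID (mem M)) /= addrC -sumrN.
  by congr (_ + _); apply: eq_bigr => i; rewrite /s; [move=> /negbTE -> | move=> ->].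
rewrite -[2^-1 *+ n]mulr_natl hl1 -/(l1norm r) -/(l2sq b) in hsum.
lra.
Qed.

Lemma l1norm_le_of_balance n (v : 'cV[R]_n) (M : {set 'I_n}) sigma (c K : R) :
  2^-1 < c -> 0 < sigma ->
  c * l1norm v <= \sum_(i < n | i \notin M) `|v i 0| ->
  sigma * (\sum_(i < n | i \notin M) `|v i 0| - \sum_(i < n | i \in M) `|v i 0|) <= K ->
  l1norm v <= K / (sigma * (2 * c - 1)).
Proof.
move=> hc s0 hcv hbal; have hsc : 0 < sigma * (2 * c - 1) by apply: mulr_gt0 => //; lra.
rewrite ler_pdivlMr // /l1norm (bigID (mem M)) /=.
move: hcv; rewrite /l1norm (bigID (mem M)) /= => /(ler_wpM2l (ltW s0)).
nra.
Qed.

Lemma c_k_mul_le n p (X : 'M[R]_(n, p)) (S : {set 'I_n}) (w : 'cV[R]_p) :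
  c_k X #|S| * \sum_(i < n) `|(X *m w) i 0| <= \sum_(i < n | i \notin S) `|(X *m w) i 0|.
Proof.
have [->|hw] := eqVneq w 0.
  by rewrite mulmx0 big1 ?mulr0 ?sumr_ge0 // => i _; rewrite mxE normr0.
have [hz|hpos] := eqVneq (\sum_(i < n) `|(X *m w) i 0|) 0.
  by rewrite hz mulr0 sumr_ge0.
have hlb : has_lbound [set r : R | exists (S' : {set 'I_n}) (g : 'cV[R]_p),
    #|S'| = #|S| /\ g != 0 /\ r = ck_ratio X S' g].
  by exists 0 => r [S' [g [_ [_ ->]]]]; rewrite /ck_ratio divr_ge0 // sumr_ge0.
have := ge_inf hlb (ex_intro _ S (ex_intro _ w (conj erefl (conj hw erefl)))).
by rewrite /ck_ratio ler_pdivlMr // lt_def hpos sumr_ge0.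
Qed.

Lemma m_of_spec n p (X : 'M[R]_(n, p)) (M : {set 'I_n}) :
  (#|M| <= m_of X)%N ->
  exists2 c : R, 2^-1 < c & forall w : 'cV[R]_p,
    c * \sum_(i < n) `|(X *m w) i 0| <= \sum_(i < n | i \notin M) `|(X *m w) i 0|.
Proof.
move=> hM; pose P (k : 'I_n.+1) := (0 < k)%N && (2^-1 < c_k X k).
have [k Pk | P0] := pickP P; last first.
  have hM0 : M = finset.set0.
    by apply: cards0_eq; move: hM; rewrite /m_of big_pred0 //; lia.
  exists 1 => [|w]; first lra.
  have -> : \sum_(i < n | i \notin M) `|(X *m w) i 0| = \sum_(i < n) `|(X *m w) i 0|.
    by apply: eq_bigl => i; rewrite hM0 inE.
  by rewrite mul1r.
have [k0 /andP[_ hck0] hk0] := @eq_bigmax_cond _ P (fun k => val k)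
  ltac:(by apply/card_gt0P; exists k).
have [S hMS hS] : exists2 S : {set 'I_n}, M \subset S & #|S| = k0.
  apply: exists_superset_card; rewrite card_ord -hk0 hM /=.
  by apply/bigmax_leqP => i _; rewrite -ltnS.
exists (c_k X k0) => // w.
rewrite -hS; apply: le_trans (c_k_mul_le X S w) _.
by apply: sum_notin_le_subset.
Qed.

End L1L2Breakdown.

Theorem corollary4p6 (R : realType) (n p : nat) (X : 'M[R]_(n, p)) (sigma : R) :
  (p < n)%N -> \rank X = p -> 0 < sigma ->
  forall (f : 'cV[R]_p) (z : 'cV[R]_n) (M : {set 'I_n}),
    (#|M| <= m_of X)%N ->
    exists C : R,
      forall e : 'cV[R]_n, (forall i : 'I_n, i \notin M -> e i 0 = 0) ->
      forall (g : 'cV[R]_p) (b : 'cV[R]_n),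
        is_l1l2_minimizer sigma X (X *m f + z + e) g b ->
        l1norm g <= C.
Proof.
move=> _ rkX s0 f z M hM.
have [B hB] : exists B : 'M[R]_(p, n), B *m X = 1%:M.
  by apply/row_fullP; rewrite /row_full rkX.
have [c hc hcM] := m_of_spec hM.
pose K := n%:R * (sigma ^+ 2 / 2) + 2 * sigma * l1norm z.
pose CB := \sum_(j < p) \sum_(i < n) `|B j i|.
exists (l1norm f + CB * (K / (sigma * (2 * c - 1)))) => e he g b hmin.
have hres : \sum_(i < n | i \notin M) `|(X *m f + z + e - X *m f) i 0| <= l1norm z.
  rewrite /l1norm [leRHS](bigID (fun i => i \notin M)) /=.
  under eq_bigr => i /he ei0 do rewrite !mxE ei0 addr0 addrC addKr.
  by rewrite lerDl sumr_ge0.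
have hbal := l1l2_minimizer_balance f M (ltW s0) hmin.
have hXw : l1norm (X *m (g - f)) <= K / (sigma * (2 * c - 1)).
  apply: (l1norm_le_of_balance hc s0 (hcM _) (le_trans hbal _)).
  by rewrite /K lerD2l; apply: ler_wpM2l hres; apply: mulr_ge0 (ltW s0).
have hCB : 0 <= CB by apply: sumr_ge0 => j _; apply: sumr_ge0.
rewrite -{1}(subrK f g); apply: le_trans (l1normD _ _) _; rewrite addrC lerD2l.
apply: le_trans (l1norm_le_leftinv (g - f) hB) _.
exact: ler_wpM2l.
Qed.
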